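(* Consider the Gaussian crossed effect model with $K=2$, $L=1$, $I_1=I_2=I$, and the circulant design $n^{(1,2)}_{ij}=1$ if the cyclic distance between $i$ and $j$ modulo $I$ is at most $d/2$ and $n^{(1,2)}_{ij}=0$ otherwise, where $d$ is a positive even integer with $d+1\le I$ (so levels are balanced with $\bar n=d+1$ and $N=I(d+1)$). Using the ordering $(a^{(1)}_1,\dots,a^{(1)}_I,a^{(2)}_1,\dots,a^{(2)}_I,a^{(0)})$, the ratio $n_{\boldsymbol{L}}/n_{\boldsymbol{Q}}$ is bounded by a constant (e.g. $3$) uniformly in $N$ and $d$, and $\mathrm{Cost(SLA)}=\Theta(N\bar n)$ with constants independent of $N$ and $d$.
   Context: Model: $y_j\sim\mathcal{N}(a^{(0)}+a^{(1)}_{i_1[j]}+a^{(2)}_{i_2[j]},\tau^{-1})$, priors $a^{(k)}_i\sim\mathcal{N}(0,\tau_k^{-1})$, $a^{(0)}\sim\mathcal{N}(\mu_{pr},T_{pr}^{-1})$; $n^{(1,2)}_{ij}$ is the number of observations with factor-1 level $i$ and factor-2 level $j$; $\bar n=KN/p$ with $p=I_1+I_2$. The posterior precision $\boldsymbol{Q}$ has entries $\boldsymbol{Q}[a^{(0)},a^{(0)}]=T_{pr}+N\tau$, $\boldsymbol{Q}[a^{(0)},a^{(k)}_i]=n^{(k)}_i\tau$, $\boldsymbol{Q}[a^{(k)}_i,a^{(k)}_i]=\tau_k+n^{(k)}_i\tau$, $\boldsymbol{Q}[a^{(1)}_i,a^{(2)}_j]=n^{(1,2)}_{ij}\tau$,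 zero otherwise. $G_{\boldsymbol{Q}}$: graph with edge iff off-diagonal entry nonzero. For the given ordering $\theta_1,\dots,\theta_M$, $n_{\boldsymbol{L},m}$ counts $j\ge m$ with $j=m$ or a path from $\theta_m$ to $\theta_j$ in $G_{\boldsymbol{Q}}$ with all intermediate vertices among $\theta_1,\dots,\theta_{m-1}$; $n_{\boldsymbol{L}}=\sum_m n_{\boldsymbol{L},m}$; $n_{\boldsymbol{Q}}$ is the number of nonzero entries in the lower-triangular part (including diagonal) of $\boldsymbol{Q}$. $\mathrm{Cost(SLA)}$ is the flop count of the column Cholesky recursion $L_{mm}^2=Q_{mm}-\sum_{\ell<m}L_{m\ell}^2$, $L_{jm}=(Q_{jm}-\sum_{\ell<m}L_{j\ell}L_{m\ell})/L_{mm}$, restricted to the potential nonzero pattern; it satisfies $\mathrm{Cost(SLA)}=\Theta(\sum_m n_{\boldsymbol{L},m}^2)$. $A=\Theta(B)$ means $c_1\le A/B\le c_2$ for constants $c_1,c_2>0$. *)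

From mathcomp Require Import all_boot all_order all_algebra.
Set Implicit Arguments. Unset Strict Implicit. Unset Printing Implicit Defensive.
Import Order.TTheory GRing.Theory Num.Theory.
Local Open Scope ring_scope.

(* Design: n12 i j = number of observations with factor-1 level i and
   factor-2 level j (i < I1, j < I2). *)
Definition n1 (I2 : nat) (n12 : nat -> nat -> nat) (i : nat) : nat :=
  (\sum_(j < I2) n12 i j)%N.
Definition n2 (I1 : nat) (n12 : nat -> nat -> nat) (j : nat) : nat :=
  (\sum_(i < I1) n12 i j)%N.
Definition Nobs (I1 I2 : nat) (n12 : nat -> nat -> nat) : nat :=
  (\sum_(i < I1) \sum_(j < I2) n12 i j)%N.

Inductive param := A0 | A1 of nat | A2 of nat.

Definition role (I1 I2 : nat) (p : nat) : param :=
  if (p < I1)%N then A1 p else if (p < I1 + I2)%N then A2 (p - I1) else A0.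

Section Prec.
Variable R : realFieldType.
Variables (tau tau1 tau2 Tpr : R) (I1 I2 : nat) (n12 : nat -> nat -> nat).

Definition Qent (x y : param) : R :=
  match x, y with
  | A0, A0 => Tpr + (Nobs I1 I2 n12)%:R * tau
  | A0, A1 i | A1 i, A0 => (n1 I2 n12 i)%:R * tau
  | A0, A2 j | A2 j, A0 => (n2 I1 n12 j)%:R * tau
  | A1 i, A1 i' => if i == i' then tau1 + (n1 I2 n12 i)%:R * tau else 0
  | A2 j, A2 j' => if j == j' then tau2 + (n2 I1 n12 j)%:R * tau else 0
  | A1 i, A2 j | A2 j, A1 i => (n12 i j)%:R * tau
  end.

Definition precQ : 'M[R]_((I1 + I2).+1) :=
  \matrix_(p, q) Qent (role I1 I2 p) (role I1 I2 q).
End Prec.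

Section Sparse.
Variable R : realFieldType.
Variable M : nat.
Variable Q : 'M[R]_M.

Definition edgeQ : rel 'I_M := fun x y => (x != y) && (Q x y != 0).

(* Steps allowed when searching paths from theta_m: every vertex that is the
   source of a step is theta_m itself or an earlier vertex theta_l (l < m);
   hence all intermediate vertices lie among theta_1..theta_(m-1). *)
Definition stepL (m : 'I_M) : rel 'I_M := fun x y => edgeQ x y && (x <= m)%N.

(* Potential nonzero pattern of L: entry (j, m), j >= m. *)
Definition Lpat (j m : 'I_M) : bool :=
  (m <= j)%N && ((j == m) || connect (stepL m) m j).

Definition nLm (m : 'I_M) : nat := #|[set j : 'I_M | Lpat j m]|.
Definition nL : nat := (\sum_(m < M) nLm m)%N.

Definition nQ : nat :=
  #|[set pq : 'I_M * 'I_M | (pq.2 <= pq.1)%N && (Q pq.1 pq.2 != 0)]|.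

(* Flop count of the column Cholesky recursion restricted to the potential
   nonzero pattern:
   L_mm^2 = Q_mm - sum_{l<m} L_ml^2     : 2 flops per pattern term + 1 sqrt,
   L_jm = (Q_jm - sum_{l<m} L_jl L_ml)/L_mm : 2 flops per pattern term + 1 div. *)
Definition costSLA : nat :=
  (\sum_(m < M)
     (1 + 2 * #|[set l : 'I_M | (l < m)%N && Lpat m l]|
      + \sum_(j < M | (m < j)%N && Lpat j m)
          (1 + 2 * #|[set l : 'I_M | [&& (l < m)%N, Lpat j l & Lpat m l]]|)))%N.
End Sparse.

Definition circ_dist (I i j : nat) : nat :=
  let k := ((i + I - j) %% I)%N in minn k (I - k).

Definition circ_design (I d : nat) (i j : nat) : nat :=
  if (circ_dist I i j <= d./2)%N then 1%N else 0%N.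

From mathcomp Require Import all_boot all_order all_algebra zify ring.
Set Implicit Arguments. Unset Strict Implicit. Unset Printing Implicit Defensive.
Import Order.TTheory GRing.Theory Num.Theory.

(* Positions 0..I-1 are the factor-1 levels, I..2I-1 the factor-2 levels and 2I
   the intercept.  G_Q is bipartite between the two factors (plus the intercept),
   level i of factor 1 being adjacent to level j of factor 2 iff i and j are at
   cyclic distance at most h. *)

Lemma card_le_intervals n (A : {pred 'I_n}) (ivs : seq (nat * nat)) :
  (forall x : 'I_n, x \in A -> has (fun iv => (iv.1 <= x) && (x <= iv.2)) ivs) ->
  #|A| <= sumn [seq iv.2.+1 - iv.1 | iv <- ivs].
Proof.
move=> covered; rewrite cardE -(size_map val).
have -> : sumn [seq iv.2.+1 - iv.1 | iv <- ivs] =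
          size (flatten [seq iota iv.1 (iv.2.+1 - iv.1) | iv <- ivs]).
  by rewrite size_flatten /shape -map_comp; congr sumn; apply: eq_map => iv /=; rewrite size_iota.
apply: uniq_leq_size; first by rewrite (map_inj_uniq val_inj) enum_uniq.
move=> y /mapP [x]; rewrite mem_enum => /covered /hasP [[lo hi] iv_in /= /andP [lox xhi]] ->.
apply/flattenP; exists (iota lo (hi.+1 - lo)); first by apply/mapP; exists (lo, hi).
by rewrite mem_iota; lia.
Qed.

Lemma card_ge_interval n (A : {pred 'I_n}) lo c : lo + c <= n ->
  (forall x : 'I_n, lo <= x < lo + c -> x \in A) -> c <= #|A|.
Proof.
move=> lo_c_n contains; rewrite cardE -(size_map val) -(size_iota lo c).
apply: uniq_leq_size; first exact: iota_uniq.
move=> p; rewrite mem_iota => p_in.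
have p_lt_n : p < n by lia.
by apply/mapP; exists (Ordinal p_lt_n); rewrite // mem_enum; apply: contains.
Qed.

Lemma card_set_sum (T : finType) (P : pred T) : #|[set x | P x]| = \sum_x (P x : nat).
Proof.
by rewrite -sum1_card big_mkcond /=; apply: eq_bigr => x _; rewrite inE; case: (P x).
Qed.

Lemma sum_ge_interval n (P : pred 'I_n) (g : 'I_n -> nat) lo cnt c : lo + cnt <= n ->
  (forall x : 'I_n, lo <= x < lo + cnt -> P x && (c <= g x)) ->
  cnt * c <= \sum_(x < n | P x) g x.
Proof.
move=> lo_cnt_n good.
apply: (@leq_trans (\sum_(x < n | lo <= x < lo + cnt) c)).
  by rewrite sum_nat_const leq_mul2r (card_ge_interval lo_cnt_n) ?orbT.
rewrite big_mkcond [X in _ <= X]big_mkcond; apply: leq_sum => x _.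
by case: ifP => // /good /andP [-> ->].
Qed.

Section CholeskyPattern.
Variables (R : realFieldType) (M : nat) (Q : 'M[R]_M).

Lemma Lpat_confined (m : 'I_M) (S : pred 'I_M) :
  S m -> (forall u v, edgeQ Q u v -> u <= m -> S u -> S v) ->
  forall j, Lpat Q j m -> (m <= j) && S j.
Proof.
move=> Sm closedS j /andP [mj]; rewrite mj /=.
case/orP => [/eqP -> // | /connectP [p mp ->]].
suff walk_in x q : S x -> path (stepL Q m) x q -> S (last x q) by exact: walk_in.
elim: q x => [| y q IHq] x //= Sx /andP [/andP [exy xm] walk].
exact: IHq (closedS _ _ exy xm Sx) walk.
Qed.

Lemma Lpat_edge (l j : 'I_M) : l <= j -> edgeQ Q l j -> Lpat Q j l.
Proof.
move=> lj e; rewrite /Lpat lj /=; apply/orP; right.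
by apply: connect1; rewrite /stepL e leqnn.
Qed.

Lemma Lpat_fill (m l j : 'I_M) :
  m <= j -> l <= m -> edgeQ Q m l -> edgeQ Q l j -> Lpat Q j m.
Proof.
move=> mj lm eml elj; rewrite /Lpat mj /=; apply/orP; right.
apply: (connect_trans (y := l)); apply: connect1; by rewrite /stepL ?eml ?elj ?leqnn.
Qed.

Lemma nL_le B : (forall m, nLm Q m <= B) -> nL Q <= M * B.
Proof.
move=> colB; rewrite /nL -[M in M * _]card_ord -sum_nat_const.
by apply: leq_sum => m _; apply: colB.
Qed.

(* Double counting the pattern terms of the diagonal updates: the pair (m, l) is
   an entry of column l. *)
Lemma sum_row_counts_le :
  \sum_(m < M) #|[set l : 'I_M | (l < m) && Lpat Q m l]| <= nL Q.
Proof.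
rewrite /nL [X in _ <= X](eq_bigr (fun l => \sum_m (Lpat Q m l : nat))); last first.
  by move=> l _; rewrite /nLm card_set_sum.
rewrite exchange_big /=; apply: leq_sum => m _; rewrite card_set_sum.
by apply: leq_sum => l _; case: (l < m); case: (Lpat Q m l).
Qed.

(* Double counting the pattern terms of the off-diagonal updates: the triple
   (m, j, l) is a pair of entries of column l, so column l contributes at most
   n_{L,l}^2 such triples. *)
Lemma sum_common_counts_le :
  \sum_(m < M) \sum_(j < M | (m < j) && Lpat Q j m)
     #|[set l : 'I_M | [&& l < m, Lpat Q j l & Lpat Q m l]]|
  <= \sum_(l < M) nLm Q l * nLm Q l.
Proof.
apply: (@leq_trans (\sum_(m < M) \sum_(j < M) \sum_(l < M)
                      ((Lpat Q j l : nat) * (Lpat Q m l : nat)))).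
  apply: leq_sum => m _; rewrite big_mkcond; apply: leq_sum => j _; case: ifP => // _.
  rewrite card_set_sum; apply: leq_sum => l _.
  by case: (l < m); case: (Lpat Q j l); case: (Lpat Q m l).
rewrite (eq_bigr (fun m => \sum_(l < M) \sum_(j < M)
                    ((Lpat Q j l : nat) * (Lpat Q m l : nat)))); last first.
  by move=> m _; rewrite exchange_big.
rewrite exchange_big /=; apply: leq_sum => l _; rewrite /nLm card_set_sum big_distrl /=.
by apply: leq_sum => m _; rewrite big_distrr /=; apply: leq_sum => j _; rewrite mulnC.
Qed.

Lemma costSLA_le B : (forall l, nLm Q l <= B) -> costSLA Q <= M * (1 + 3 * B + 2 * (B * B)).
Proof.
move=> colB.
have nL_B := nL_le colB.
have sq_B : \sum_(l < M) nLm Q l * nLm Q l <= M * (B * B).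
  rewrite -[M in M * _]card_ord -sum_nat_const.
  by apply: leq_sum => l _; apply: leq_mul.
apply: (@leq_trans (\sum_(m < M) (1 + 2 * #|[set l : 'I_M | (l < m) && Lpat Q m l]|
   + (nLm Q m + 2 * \sum_(j < M | (m < j) && Lpat Q j m)
        #|[set l : 'I_M | [&& l < m, Lpat Q j l & Lpat Q m l]]|)))).
  apply: leq_sum => m _; rewrite leq_add2l big_split /= -big_distrr /= leq_add2r.
  rewrite sum1_card /nLm; apply: subset_leq_card; apply/subsetP => j; rewrite !inE.
  by case/andP.
rewrite !big_split /= !big1_eq sum1_card card_ord -/(nL Q).
have -> : M * (1 + 3 * B + 2 * (B * B)) = M + 3 * (M * B) + 2 * (M * (B * B)) by ring.
move: nL_B sq_B sum_row_counts_le sum_common_counts_le.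
set diag_terms := \sum_(m < M) #|[set l : 'I_M | (l < m) && Lpat Q m l]|.
set off_terms := \sum_(m < M) \sum_(j < M | (m < j) && Lpat Q j m) _.
move: (M * B) (M * (B * B)) => MB MBB; lia.
Qed.

Lemma costSLA_ge_updates :
  \sum_(m < M) \sum_(j < M | (m < j) && Lpat Q j m)
     2 * #|[set l : 'I_M | [&& l < m, Lpat Q j l & Lpat Q m l]]| <= costSLA Q.
Proof.
apply: leq_sum => m _; apply: (leq_trans _ (leq_addl _ _)).
by apply: leq_sum => j _; apply: leq_addl.
Qed.
End CholeskyPattern.

(* Cyclic distance at most h between levels i, j < I, written without
   truncated subtraction. *)
Definition cyc_near (I h i j : nat) : bool :=
  [|| (i <= j + h) && (j <= i + h), i + I <= j + h | j + I <= i + h].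

Lemma circ_designE I d i j : i < I -> j < I -> circ_design I d i j = cyc_near I d./2 i j.
Proof.
move=> iI jI; rewrite /circ_design /circ_dist.
suff -> : (minn ((i + I - j) %% I) (I - (i + I - j) %% I) <= d./2) = cyc_near I d./2 i j.
  by case: cyc_near.
rewrite geq_min /cyc_near; case: (leqP j i) => ji.
  by rewrite (_ : i + I - j = i - j + I) ?modnDr ?modn_small; lia.
by rewrite modn_small; lia.
Qed.

Lemma circ_design_neq0 I d i j : i < I -> j < I ->
  (circ_design I d i j != 0) = cyc_near I d./2 i j.
Proof. by move=> iI jI; rewrite circ_designE //; case: cyc_near. Qed.

Section PrecisionGraph.
Variables (R : realFieldType) (tau tau1 tau2 Tpr : R) (I : nat) (n12 : nat -> nat -> nat).
Local Notation Q := (precQ tau tau1 tau2 Tpr I I n12).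

Lemma role_fac1 p : p < I -> role I I p = A1 p.
Proof. by rewrite /role => ->. Qed.

Lemma role_fac2 p : I <= p < I + I -> role I I p = A2 (p - I).
Proof. by rewrite /role => /andP [Ip pII]; rewrite ltnNge Ip /= pII. Qed.

Lemma edge_cases (u v : 'I_(I + I).+1) : edgeQ Q u v ->
  [/\ (u < I -> v < I -> False), (I <= u < I + I -> I <= v < I + I -> False),
      (u < I -> I <= v < I + I -> n12 u (v - I) != 0) &
      (I <= u < I + I -> v < I -> n12 v (u - I) != 0)].
Proof.
rewrite /edgeQ mxE -val_eqE /= => /andP [uv nz]; split => uI vI.
- by move: nz; rewrite role_fac1 // role_fac1 //= (negbTE uv) eqxx.
- move: nz; rewrite role_fac2 // role_fac2 //=.
  by rewrite (_ : (u - I == v - I) = false) ?eqxx //; apply/eqP; move: uv => /eqP; lia.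
- by move: nz; rewrite role_fac1 // role_fac2 //=; apply: contra => /eqP ->; rewrite mul0r.
- by move: nz; rewrite role_fac2 // role_fac1 //=; apply: contra => /eqP ->; rewrite mul0r.
Qed.

Lemma edge_between_factors (l j : 'I_(I + I).+1) : (0 < tau)%R -> l < I -> I <= j < I + I ->
  n12 l (j - I) != 0 -> edgeQ Q l j && edgeQ Q j l.
Proof.
move=> tau_gt0 lI jI nz; rewrite /edgeQ !mxE role_fac1 // role_fac2 //=.
have -> : ((n12 l (j - I))%:R * tau != 0)%R by rewrite mulf_neq0 ?pnatr_eq0 ?lt0r_neq0.
have lj : l != j by rewrite -val_eqE /=; apply/eqP; lia.
by rewrite lj eq_sym lj.
Qed.
End PrecisionGraph.

Section CirculantDesign.
Variables (I h : nat).
Hypotheses (h_gt0 : 0 < h) (band_lt_I : (2 * h).+1 <= I).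
Local Notation n12 := (circ_design I (2 * h)).

Lemma circ_neq0 i j : i < I -> j < I -> (n12 i j != 0) = cyc_near I h i j.
Proof. by move=> iI jI; rewrite circ_design_neq0 // mul2n doubleK. Qed.

Lemma row_count i : i < I -> h + 1 <= \sum_(j < I) n12 i j <= 4 * h + 2.
Proof.
move=> iI.
have -> : \sum_(j < I) n12 i j = #|[set j : 'I_I | cyc_near I h i j]|.
  by rewrite card_set_sum; apply: eq_bigr => j _; rewrite circ_designE // mul2n doubleK.
apply/andP; split.
  apply: (@card_ge_interval I _ (if h <= i then i - h else i) (h + 1)); first by case: ifP; lia.
  by move=> x; rewrite inE /cyc_near; case: ifP; lia.
apply: (leq_trans (@card_le_intervals _ [set j : 'I_I | cyc_near I h i j]
   [:: (i - h, i + h); (I - h, I - 1); (0, h)] _)); last by rewrite /=; lia.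
by move=> x; rewrite inE /cyc_near; have := ltn_ord x; rewrite /=; lia.
Qed.

(* Hence N is of order I (h + 1); note that nbar = N / I. *)
Lemma Nobs_bounds : I * (h + 1) <= Nobs I I n12 <= I * (4 * h + 2).
Proof.
rewrite /Nobs; apply/andP; split.
  rewrite -[I in I * _]card_ord -sum_nat_const.
  by apply: leq_sum => i _; case/andP: (@row_count i (ltn_ord i)).
rewrite -[I in _ <= I * _]card_ord -sum_nat_const.
by apply: leq_sum => i _; case/andP: (@row_count i (ltn_ord i)).
Qed.
End CirculantDesign.

Section CirculantGraph.
Variables (R : realFieldType) (tau tau1 tau2 Tpr : R) (I h : nat).
Hypotheses (h_gt0 : 0 < h) (band_lt_I : (2 * h).+1 <= I).
Local Notation n12 := (circ_design I (2 * h)).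
Local Notation Q := (precQ tau tau1 tau2 Tpr I I n12).
Local Notation M := (I + I).+1.

(* Pattern of a factor-1 column m: only m, the band neighbours of m in
   factor 2 and the intercept, since no step can leave a factor-2 vertex. *)
Lemma col_bound_fac1 (m : 'I_M) : m < I -> nLm Q m <= 4 * (h + 1).
Proof.
move=> mI.
pose S (p : 'I_M) := [|| (p : nat) == m, (I <= p < I + I) && cyc_near I h m (p - I)
                       | I + I <= p].
have confined : forall j, Lpat Q j m -> (m <= j) && S j.
  apply: Lpat_confined; first by rewrite /S eqxx.
  move=> u v /edge_cases [no11 _ near12 _] um Su.
  have uE : (u : nat) = m by move: Su; rewrite /S; lia.
  rewrite /S; case: (ltnP v I) => vI; first by exfalso; apply: no11; lia.
  case: (ltnP v (I + I)) => vII; last by rewrite !orbT.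
  have near : cyc_near I h m (v - I) by rewrite -uE -circ_neq0 ?near12; lia.
  by rewrite near /= orbT.
rewrite /nLm; apply: (leq_trans (@card_le_intervals _ [set j | Lpat Q j m]
  [:: (val m, val m); (m + I - h, m + I + h); (m + I + I - h, I + I - 1); (I, m + h);
      (I + I, I + I)] _)); last by rewrite /=; lia.
by move=> x; rewrite inE => /confined; have := ltn_ord x; rewrite /S /cyc_near /=; lia.
Qed.

(* Pattern of a factor-2 column m: the walks reach only factor-1 levels within h
   of an earlier factor-2 level, hence factor-2 levels within d = 2h of m
   (cyclically), besides the intercept. *)
Lemma col_bound_fac2 (m : 'I_M) : I <= m < I + I -> nLm Q m <= 4 * (h + 1).
Proof.
move=> mII.
pose S (p : 'I_M) :=
  [|| (p < I) && ((p <= m - I + h) || (I - h <= p)),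
      (I <= p < I + I) && ((p - I <= m - I + 2 * h) || (I - 2 * h <= p - I))
    | I + I <= p].
have confined : forall j, Lpat Q j m -> (m <= j) && S j.
  apply: Lpat_confined; first by rewrite /S; lia.
  move=> u v /edge_cases [no11 no22 near12 near21] um Su.
  have := ltn_ord v; rewrite /S; case: (ltnP u I) => uI.
    case: (ltnP v I) => vI; first by exfalso; apply: no11; lia.
    case: (ltnP v (I + I)) => vII; last by lia.
    have := near12 uI ltac:(lia); rewrite circ_neq0 ?/cyc_near; move: Su; rewrite /S; lia.
  case: (ltnP v I) => vI; last by case: (ltnP v (I + I)) => vII; [exfalso; apply: no22 | ]; lia.
  have := near21 ltac:(lia) vI; rewrite circ_neq0 ?/cyc_near; lia.
rewrite /nLm; apply: (leq_trans (@card_le_intervals _ [set j | Lpat Q j m]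
  [:: (val m, m + 2 * h); (I + I - 2 * h, I + I - 1); (I + I, I + I)] _)).
  by move=> x; rewrite inE => /confined; have := ltn_ord x; rewrite /S /=; lia.
by rewrite /=; lia.
Qed.

(* The intercept comes last: its column pattern is the diagonal entry alone. *)
Lemma col_bound_intercept (m : 'I_M) : I + I <= m -> nLm Q m <= 1.
Proof.
move=> IIm; rewrite /nLm; apply: (leq_trans (@card_le_intervals _ [set j | Lpat Q j m]
  [:: (I + I, I + I)] _)); last by rewrite /=; lia.
by move=> x; rewrite inE => /andP [mx _]; have := ltn_ord x; rewrite /=; lia.
Qed.

Lemma col_bound (m : 'I_M) : nLm Q m <= 4 * (h + 1).
Proof.
case: (ltnP m I) => [| Im]; first exact: col_bound_fac1.
case: (ltnP m (I + I)) => [mII | IIm]; first by apply: col_bound_fac2; rewrite Im.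
by have := col_bound_intercept IIm; lia.
Qed.

Hypothesis tau_gt0 : (0 < tau)%R.

Lemma edge_band (l j : 'I_M) : l < I -> I <= j < I + I -> cyc_near I h l (j - I) ->
  edgeQ Q l j && edgeQ Q j l.
Proof.
by move=> lI jII near; apply: edge_between_factors => //; rewrite circ_neq0 //; lia.
Qed.

(* Each factor-2 row of Q has at least h + 1 nonzeros among the factor-1
   columns, all of them below the diagonal. *)
Lemma nQ_ge : I * (h + 1) <= nQ Q.
Proof.
rewrite /nQ card_set_sum.
rewrite -(pair_bigA _ (fun p q : 'I_M => ((q <= p) && (Q p q != 0%R) : nat))) /=.
apply: (@sum_ge_interval M xpredT _ I I (h + 1)); first lia.
move=> p pII /=; rewrite -card_set_sum.
apply: (@card_ge_interval M _ (if h <= p - I then p - I - h else p - I) (h + 1)).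
  by case: ifP; lia.
move=> q qrange; rewrite inE.
have qI : q < I by move: qrange; case: ifP; lia.
have /andP [_ /andP [_ ->]] : edgeQ Q q p && edgeQ Q p q.
  by apply: edge_band; move: qrange; rewrite /cyc_near; case: ifP; lia.
by rewrite andbT; lia.
Qed.

(* Fill-in in factor 2: for I <= m < 2I - h and m < j <= m + a, the factor-1
   levels m - I + a, ..., m - I + h are common earlier neighbours of m and j. *)
Lemma common_neighbour (m j l : 'I_M) a : I <= m -> m + h < I + I -> m < j <= m + a ->
  m - I + a <= l <= m - I + h -> [&& edgeQ Q l m, edgeQ Q m l & edgeQ Q l j].
Proof.
move=> Im mhII mj lrange.
have /andP [-> ->] : edgeQ Q l m && edgeQ Q m l by apply: edge_band; rewrite /cyc_near; lia.
by have /andP [] : edgeQ Q l j && edgeQ Q j l by apply: edge_band; rewrite /cyc_near; lia.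
Qed.

(* Cost(SLA) is at least (I - h) a (2 (h + 1 - a)) for any a <= h: the I - h
   first eligible factor-2 columns each have a fill-in rows, each updated with
   h + 1 - a common terms. *)
Lemma costSLA_ge a : a <= h -> (I - h) * (a * (2 * (h + 1 - a))) <= costSLA Q.
Proof.
move=> ah; apply: leq_trans (costSLA_ge_updates Q).
apply: (@sum_ge_interval M xpredT _ I (I - h)); first lia.
move=> m mrange /=.
apply: (@sum_ge_interval M _ _ m.+1 a); first lia.
move=> j jrange.
have common (l : 'I_M) : m - I + a <= l <= m - I + h -> [&& edgeQ Q l m, edgeQ Q m l & edgeQ Q l j].
  by move=> lrange; apply: (@common_neighbour m j l a); lia.
apply/andP; split.
  have l0_lt : m - I + a < M by lia.
  have /and3P [_ eml0 el0j] := common (Ordinal l0_lt) ltac:(rewrite /=; lia).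
  rewrite (_ : m < j) /=; last by lia.
  by apply: (Lpat_fill _ _ eml0 el0j) => /=; lia.
rewrite leq_mul2l /=; apply: (@card_ge_interval M _ (m - I + a) (h + 1 - a)); first lia.
move=> l lrange; rewrite inE.
have /and3P [elm _ elj] := common l ltac:(lia).
have lm : l < m by lia.
by rewrite lm (Lpat_edge _ elm) ?(Lpat_edge _ elj) //; lia.
Qed.
End CirculantGraph.

(* n_L <= (2I + 1) 4(h + 1) and n_Q >= I (h + 1) give n_L <= 12 n_Q. *)
Lemma nL_nQ_ratio I h nl nq : 0 < I ->
  nl <= (I + I).+1 * (4 * (h + 1)) -> I * (h + 1) <= nq -> nl <= 12 * nq.
Proof.
move=> I_gt0 nl_le nq_ge; apply: (leq_trans nl_le).
apply: (@leq_trans (12 * (I * (h + 1)))); last by rewrite leq_mul2l nq_ge orbT.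
nia.
Qed.

(* Upper bound: Cost <= (2I + 1)(1 + 3B + 2B^2) with B = 4(h + 1) is at most
   135 I (h + 1)^2 <= 135 N^2 / I. *)
Lemma cost_upper_ratio I h N X : 0 < I ->
  X <= (I + I).+1 * (1 + 3 * (4 * (h + 1)) + 2 * (4 * (h + 1) * (4 * (h + 1)))) ->
  I * (h + 1) <= N -> X * I <= 135 * (N * N).
Proof.
move=> I_gt0 X_le N_ge.
have X_le' : X <= 135 * (I * ((h + 1) * (h + 1))).
  apply: (leq_trans X_le).
  have -> : 135 * (I * ((h + 1) * (h + 1))) = (3 * I) * (45 * ((h + 1) * (h + 1))) by ring.
  by apply: leq_mul; nia.
apply: (@leq_trans (135 * ((I * (h + 1)) * (I * (h + 1))))); last first.
  by rewrite leq_mul2l leq_mul ?orbT.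
have -> : 135 * ((I * (h + 1)) * (I * (h + 1))) = 135 * (I * ((h + 1) * (h + 1))) * I by ring.
by rewrite leq_mul2r X_le' orbT.
Qed.

(* Lower bound: with a = (h + 1)/2, Cost >= (I - h) a 2(h + 1 - a) >= I h (h + 1) / 4,
   while N^2 <= I^2 (4h + 2)^2 <= 36 I^2 h (h + 1). *)
Lemma cost_lower_ratio I h N X : 0 < h -> (2 * h).+1 <= I ->
  (I - h) * ((h + 1)./2 * (2 * (h + 1 - (h + 1)./2))) <= X ->
  N <= I * (4 * h + 2) -> N * N <= 144 * (X * I).
Proof.
move=> h_gt0 band_lt_I X_ge N_le.
set a := (h + 1)./2 in X_ge.
have a_bounds : h <= 2 * a <= h + 1.
  by have := odd_double_half (h + 1); rewrite -/a; case: odd => /=; lia.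
clearbody a.
have fill : I * h * (h + 1) <= (2 * (I - h)) * (2 * a) * (2 * (h + 1 - a)).
  by apply: leq_mul; [apply: leq_mul |]; lia.
have sq : (4 * h + 2) * (4 * h + 2) <= 36 * (h * (h + 1)) by nia.
have X_ge' : I * ((4 * h + 2) * (4 * h + 2)) <= 144 * X.
  apply: (@leq_trans (36 * (I * h * (h + 1)))).
    have -> : 36 * (I * h * (h + 1)) = I * (36 * (h * (h + 1))) by ring.
    by rewrite leq_mul2l sq orbT.
  apply: (@leq_trans (36 * ((2 * (I - h)) * (2 * a) * (2 * (h + 1 - a))))).
    by rewrite leq_mul2l fill orbT.
  have -> : 36 * (2 * (I - h) * (2 * a) * (2 * (h + 1 - a)))
          = 144 * ((I - h) * (a * (2 * (h + 1 - a)))) by ring.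
  by rewrite leq_mul2l X_ge orbT.
apply: (@leq_trans ((I * (4 * h + 2)) * (I * (4 * h + 2)))); first exact: leq_mul.
have -> : (I * (4 * h + 2)) * (I * (4 * h + 2)) = I * (I * ((4 * h + 2) * (4 * h + 2))) by ring.
have -> : 144 * (X * I) = I * (144 * X) by ring.
by rewrite leq_mul2l X_ge' orbT.
Qed.

Local Open Scope ring_scope.

(* Transfer of the integer estimates to the real ratios of the statement, using
   N nbar = N^2 / I. *)
Lemma real_ratio_bounds (R : realFieldType) (I N nl nq X : nat) :
  (0 < I)%N -> (0 < N)%N -> (0 < nq)%N -> (nl <= 12 * nq)%N ->
  (X * I <= 135 * (N * N))%N -> (N * N <= 144 * (X * I))%N ->
  (nl%:R / nq%:R : R) <= 12%:R /\
  (144%:R)^-1 <= (X%:R / (N%:R * ((2 * N)%N%:R / (I + I)%N%:R)) : R) <= 135%:R.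
Proof.
move=> I_gt0 N_gt0 nq_gt0 nl_le X_le X_ge.
split; first by rewrite ler_pdivrMr ?ltr0n // -natrM ler_nat.
have I_neq0 : I%:R != 0 :> R by rewrite pnatr_eq0 -lt0n.
have N_nbar : N%:R * ((2 * N)%N%:R / (I + I)%N%:R) = (N * N)%N%:R / I%:R :> R.
  rewrite natrM natrD natrM; field.
  by rewrite I_neq0 -mulr2n mulrn_eq0 /= I_neq0.
have NN_gt0 : 0 < (N * N)%N%:R :> R by rewrite ltr0n muln_gt0 N_gt0.
rewrite N_nbar invf_div mulrA -natrM; apply/andP; split.
  by rewrite ler_pdivlMr // mulrC ler_pdivrMr ?ltr0n // mulrC -natrM ler_nat.
by rewrite ler_pdivrMr // -natrM ler_nat.
Qed.

Theorem proposition4 (R : realFieldType) :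
  exists C c1 c2 : R, 0 < c1 /\ 0 < c2 /\
  forall (tau tau1 tau2 Tpr : R),
    0 < tau -> 0 < tau1 -> 0 < tau2 -> 0 < Tpr ->
  forall I d : nat, (0 < d)%N -> ~~ odd d -> (d.+1 <= I)%N ->
    let n12 := circ_design I d in
    let Q := precQ tau tau1 tau2 Tpr I I n12 in
    let N := Nobs I I n12 in
    let nbar : R := (2 * N)%:R / (I + I)%:R in
    (nL Q)%:R / (nQ Q)%:R <= C /\
    c1 <= (costSLA Q)%:R / (N%:R * nbar) <= c2.
Proof.
exists 12%:R, (144%:R)^-1, 135%:R; split; first by rewrite invr_gt0 ltr0n.
split=> [|tau tau1 tau2 Tpr tau_gt0 _ _ _ I d d_gt0 d_even dI]; first by rewrite ltr0n.
have dE : d = (2 * d./2)%N by rewrite mul2n even_halfK.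
have h_gt0 : (0 < d./2)%N by move: d_gt0; rewrite {1}dE; lia.
move: (d./2) dE h_gt0 => h -> h_gt0 in dI * => n12 Q N nbar; rewrite {}/nbar {}/N {}/Q {}/n12.
have col_le := col_bound tau tau1 tau2 Tpr h_gt0 dI.
have /andP [N_ge N_le] := Nobs_bounds h_gt0 dI.
have nQ_ge_band := nQ_ge tau1 tau2 Tpr h_gt0 dI tau_gt0.
have half_le : ((h + 1)./2 <= h)%N by rewrite leq_half_double -mul2n; lia.
have I_gt0 : (0 < I)%N by lia.
have Ih_gt0 : (0 < I * (h + 1))%N by rewrite muln_gt0 I_gt0 addn1.
apply: real_ratio_bounds => //.
- exact: leq_trans Ih_gt0 N_ge.
- exact: leq_trans Ih_gt0 nQ_ge_band.
- exact: nL_nQ_ratio I_gt0 (nL_le col_le) nQ_ge_band.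
- exact: cost_upper_ratio I_gt0 (costSLA_le col_le) N_ge.
- exact: cost_lower_ratio h_gt0 dI (costSLA_ge tau1 tau2 Tpr h_gt0 dI tau_gt0 half_le) N_le.
Qed.
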